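(* Restriction of rational functions induces an isomorphism $\mathbb C(\mathscr X_2)^G\cong\mathbb C(\mathcal S)^N$.
   Context: Identify $V_1=V_2=\mathbb C^2$ with Pauli matrices $\sigma_1=\begin{pmatrix}0&1\\1&0\end{pmatrix}$, $\sigma_2=\begin{pmatrix}0&-i\\i&0\end{pmatrix}$, $\sigma_3=\begin{pmatrix}1&0\\0&-1\end{pmatrix}$. Trace-one endomorphisms of $\mathbb C^2\otimes\mathbb C^2$ are written uniquely as $\tfrac14\big(I\otimes I+\sum_a v_a\sigma_a\otimes I+\sum_b w_bI\otimes\sigma_b+\sum_{a,b}C_{ba}\sigma_a\otimes\sigma_b\big)$, giving coordinates $(v,w,C)\in\mathbb C^3\times\mathbb C^3\times M_3(\mathbb C)$ on the space $\mathscr L_2$; $G=\mathrm{SO}_3(\mathbb C)^2$ acts by $(g_1,g_2)\cdot(v,w,C)=(g_1v,g_2w,g_2Cg_1^{-1})$. Let $X_0$ be the subspace with $v_1=v_2=w_1=w_2=0$ and $C_{ba}=0$ whenever exactly one of $a,b$ equals $3$; $\mathscr X_2$ is the Zariski closure of $G\cdot X_0$ (equivalently of the set of two-qubit X-states), with reduced structure. $\mathcal S\subseteq\mathscr X_2$ is the image of $(x,y,\lambda)\in\mathbb C\times\mathbb C\times\mathbb C^3\mapsto((0,0,x),(0,0,y),\operatorname{diag}(\lambda_1,\lambda_2,\lambda_3))$. $N\subseteq G$ is the group of order $32$ of pairs $(g_1,g_2)$ with $g_k=\begin{pmatrix}A_k&0\\0&\det A_k\end{pmatrix}$, where $A_1,A_2$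 are $2\times 2$ signed permutation matrices (entries in $\{0,\pm1\}$) having the same underlying permutation; $N$ preserves $\mathcal S$. *)

From HB Require Import structures.
From mathcomp Require Import all_boot all_order all_algebra all_fingroup.
From mathcomp Require Import mpoly.
From mathcomp Require Import reals.
From mathcomp Require Import complex.

Set Implicit Arguments.
Unset Strict Implicit.
Unset Printing Implicit Defensive.
Import Order.TTheory GRing.Theory Num.Theory.
Local Open Scope ring_scope.

Section XStates.
Variable K : fieldType.

(* A point (v, w, C) of the space L_2 of trace-one endomorphisms of C^2 (x) C^2,
   in the Pauli coordinates of the paper; C b a = C_{ba}, indices 0,1,2 <-> 1,2,3. *)
Definition pt := ('cV[K]_3 * 'cV[K]_3 * 'M[K]_3)%type.

Definition coords (z : pt) : 'I_15 -> K :=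
  fun i => let: (v, w, C) := z in
    if (i < 3)%N then v (inord i) 0
    else if (i < 6)%N then w (inord (i - 3)) 0
    else C (inord ((i - 6) %/ 3)) (inord ((i - 6) %% 3)).

Definition polyL := {mpoly K[15]}.
Definition ev (p : polyL) (z : pt) : K := p.@[coords z].

Definition SO3 (g : 'M[K]_3) : Prop := g^T *m g = 1%:M /\ \det g = 1.

Definition act (g1 g2 : 'M[K]_3) (z : pt) : pt :=
  let: (v, w, C) := z in (g1 *m v, g2 *m w, g2 *m C *m invmx g1).

Definition inG (g1 g2 : 'M[K]_3) : Prop := SO3 g1 /\ SO3 g2.

Definition X0 (z : pt) : Prop :=
  let: (v, w, C) := z in
  [/\ v 0 0 = 0, v 1 0 = 0, w 0 0 = 0, w 1 0 = 0 &
      forall b a : 'I_3, (b == 2 :> 'I_3) != (a == 2 :> 'I_3) -> C b a = 0].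

Definition GX0 (z : pt) : Prop := exists g1 g2 x, [/\ inG g1 g2, X0 x & z = act g1 g2 x].

Definition vanish_on (Y : pt -> Prop) (f : pt -> K) : Prop := forall z, Y z -> f z = 0.

Definition zclosure (Y : pt -> Prop) (z : pt) : Prop :=
  forall p : polyL, vanish_on Y (ev p) -> ev p z = 0.

(* script X_2, with its reduced structure (ideal = all polynomials vanishing on it) *)
Definition X2 : pt -> Prop := zclosure GX0.

Definition Ssub (z : pt) : Prop :=
  exists (x y : K) (l : 'rV[K]_3),
    z = (\col_i (if i == 2 :> 'I_3 then x else 0),
         \col_i (if i == 2 :> 'I_3 then y else 0),
         diag_mx l).

Definition signed_perm (s : 'S_2) (A : 'M[K]_2) : Prop :=
  forall i j : 'I_2, if j == s i then (A i j = 1 \/ A i j = -1) else A i j = 0.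

Definition embed2 (A : 'M[K]_2) : 'M[K]_3 := block_mx A 0 0 (\det A)%:M.

Definition inN (g1 g2 : 'M[K]_3) : Prop :=
  exists (s : 'S_2) (A1 A2 : 'M[K]_2),
    [/\ signed_perm s A1, signed_perm s A2, g1 = embed2 A1 & g2 = embed2 A2].

(* Rational functions on an irreducible subvariety Y of L_2 are represented by
   fractions p/q of polynomials with q not vanishing identically on Y;
   p/q and p'/q' are the same rational function on Y iff p q' - p' q vanishes on Y. *)
Definition ratfun_on (Y : pt -> Prop) (p q : polyL) : Prop := ~ vanish_on Y (ev q).

Definition same_on (Y : pt -> Prop) (p q p' q' : polyL) : Prop :=
  vanish_on Y (fun z => ev p z * ev q' z - ev p' z * ev q z).

(* invariance of the rational function p/q on Y under a set H of linear maps
   preserving Y: (p/q) o h = p/q as rational functions on Y, for every h in H *)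
Definition invariant_on (Y : pt -> Prop) (H : 'M[K]_3 -> 'M[K]_3 -> Prop)
  (p q : polyL) : Prop :=
  forall g1 g2, H g1 g2 ->
    vanish_on Y (fun z => ev p (act g1 g2 z) * ev q z - ev p z * ev q (act g1 g2 z)).

End XStates.

(* A point of X_0 whose 2 x 2 block M is generic can be written, by a complex
   singular value decomposition M = R_2 diag(l1, l2) R_1^T with rotations R_i, as
   (R_1 (+) 1, R_2 (+) 1) applied to a point of S; so G.S is dense in X_2.  Density
   makes restriction well defined (translate a denominator by G until it is nonzero
   on S) and injective.  For surjectivity, an N-invariant fraction a/b on S equals
   (a prod_{n <> 1} b o n) / (prod_n b o n) with N-invariant denominator; summing
   numerator and denominator over the order-16 image of N turns both into
   N-invariant polynomials, and those are rational functions in the restrictions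
   of the G-invariants |v|^2, |w|^2, w^T C v, det C, |C v|^2 and tr(C^T C). *)

From HB Require Import structures.
From mathcomp Require Import all_boot all_order all_algebra all_fingroup.
From mathcomp Require Import mpoly.
From mathcomp Require Import reals.
From mathcomp Require Import complex.
From mathcomp Require Import ring zify.
From Stdlib Require Import Classical.
Import Order.TTheory GRing.Theory Num.Theory.
Local Open Scope ring_scope.

Set Implicit Arguments.
Unset Strict Implicit.
Unset Printing Implicit Defensive.

Section ExplicitMatrices.
Variable K : comPzRingType.

Definition mx3 (a b c d e f g h k : K) : 'M[K]_3 :=
  \matrix_(i < 3, j < 3) nth 0 (nth [::] [:: [:: a; b; c]; [:: d; e; f]; [:: g; h; k]] i) j.
Definition col3 (a b c : K) : 'cV[K]_3 := \col_(i < 3) nth 0 [:: a; b; c] i.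
Definition mx2 (a b c d : K) : 'M[K]_2 :=
  \matrix_(i < 2, j < 2) nth 0 (nth [::] [:: [:: a; b]; [:: c; d]] i) j.

Lemma ord2_cases (i : 'I_2) : i = 0 \/ i = 1.
Proof. by case: i => [[|[|//]] Hi]; [left | right]; apply: val_inj. Qed.

Lemma ord3_cases (i : 'I_3) : [\/ i = 0, i = 1 | i = 2].
Proof.
by case: i => [[|[|[|//]]] Hi]; [constructor 1 | constructor 2 | constructor 3]; apply: val_inj.
Qed.

Lemma mx2E (A : 'M[K]_2) : A = mx2 (A 0 0) (A 0 1) (A 1 0) (A 1 1).
Proof.
apply/matrixP => i j; rewrite mxE.
by case: (ord2_cases i) => ->; case: (ord2_cases j) => ->.
Qed.

Lemma mx3E (A : 'M[K]_3) :
  A = mx3 (A 0 0) (A 0 1) (A 0 2) (A 1 0) (A 1 1) (A 1 2) (A 2 0) (A 2 1) (A 2 2).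
Proof.
apply/matrixP => i j; rewrite mxE.
by case: (ord3_cases i) => ->; case: (ord3_cases j) => ->.
Qed.

Lemma col3E (v : 'cV[K]_3) : v = col3 (v 0 0) (v 1 0) (v 2 0).
Proof. by apply/matrixP => i j; rewrite mxE [j]ord1; case: (ord3_cases i) => ->. Qed.

Lemma sum_ord2 (F : 'I_2 -> K) : \sum_(i < 2) F i = F 0 + F 1.
Proof. by rewrite !big_ord_recr big_ord0 /= add0r; congr (F _ + F _); apply: val_inj. Qed.

Lemma sum_ord3 (F : 'I_3 -> K) : \sum_(i < 3) F i = F 0 + F 1 + F 2.
Proof. by rewrite !big_ord_recr big_ord0 /= add0r; congr (F _ + F _ + F _); apply: val_inj. Qed.

Lemma scalar_mx2 (a : K) : a%:M = mx2 a 0 0 a.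
Proof. by rewrite [LHS]mx2E !mxE. Qed.

Lemma tr_mx2 a b c d : (mx2 a b c d)^T = mx2 a c b d.
Proof. by rewrite [LHS]mx2E !mxE. Qed.

Lemma tr_mx3 a b c d e f g h k : (mx3 a b c d e f g h k)^T = mx3 a d g b e h c f k.
Proof. by rewrite [LHS]mx3E !mxE. Qed.

Lemma mul_mx2 a b c d a' b' c' d' :
  mx2 a b c d *m mx2 a' b' c' d' =
  mx2 (a * a' + b * c') (a * b' + b * d') (c * a' + d * c') (c * b' + d * d').
Proof. by rewrite [LHS]mx2E !mxE !sum_ord2 !mxE. Qed.

Lemma mul_mx3 a b c d e f g h k a' b' c' d' e' f' g' h' k' :
  mx3 a b c d e f g h k *m mx3 a' b' c' d' e' f' g' h' k' =
  mx3 (a * a' + b * d' + c * g') (a * b' + b * e' + c * h') (a * c' + b * f' + c * k')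
      (d * a' + e * d' + f * g') (d * b' + e * e' + f * h') (d * c' + e * f' + f * k')
      (g * a' + h * d' + k * g') (g * b' + h * e' + k * h') (g * c' + h * f' + k * k').
Proof. by rewrite [LHS]mx3E !mxE !sum_ord3 !mxE. Qed.

Lemma mul_mx3_col3 a b c d e f g h k x y z :
  mx3 a b c d e f g h k *m col3 x y z =
  col3 (a * x + b * y + c * z) (d * x + e * y + f * z) (g * x + h * y + k * z).
Proof. by rewrite [LHS]col3E !mxE !sum_ord3 !mxE. Qed.

Lemma dot_col3 a b c x y z : ((col3 a b c)^T *m col3 x y z) 0 0 = a * x + b * y + c * z.
Proof. by rewrite !mxE sum_ord3 !mxE. Qed.

Lemma mxtrace_mx3 a b c d e f g h k : \tr (mx3 a b c d e f g h k) = a + e + k.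
Proof. by rewrite /mxtrace sum_ord3 !mxE. Qed.

Lemma det_mx2 a b c d : \det (mx2 a b c d) = a * d - b * c.
Proof.
rewrite (expand_det_row _ 0) sum_ord2 /cofactor !mxE /=.
rewrite !(expand_det_row _ 0) !big_ord1 /cofactor !mxE /= !det_mx00.
by rewrite expr0 expr1; ring.
Qed.

Lemma det_diag_mx3 a e k : \det (mx3 a 0 0 0 e 0 0 0 k) = a * e * k.
Proof.
have -> : mx3 a 0 0 0 e 0 0 0 k = diag_mx (\row_(i < 3) nth 0 [:: a; e; k] i).
  by rewrite [RHS]mx3E !mxE /= !mulr1n !mulr0n.
by rewrite det_diag !big_ord_recr big_ord0 /= !mxE /= mul1r.
Qed.

End ExplicitMatrices.

Section FunSubalgebra.
Variables (K : comNzRingType) (D : Type).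

(* [cl_ext] is part of the structure so that no functional extensionality is needed. *)
Record fun_subalgebra (Cl : (D -> K) -> Prop) : Prop := FunSubalgebra {
  cl_ext : forall f g, Cl f -> f =1 g -> Cl g;
  cl_const : forall c, Cl (fun _ => c);
  cl_add : forall f g, Cl f -> Cl g -> Cl (fun x => f x + g x);
  cl_mul : forall f g, Cl f -> Cl g -> Cl (fun x => f x * g x) }.

Variables (Cl : (D -> K) -> Prop) (ClA : fun_subalgebra Cl).

Lemma cl_sum (I : Type) (r : seq I) (P : pred I) (F : I -> D -> K) :
  (forall i, P i -> Cl (F i)) -> Cl (fun x => \sum_(i <- r | P i) F i x).
Proof.
move=> clF; elim: r => [|i r IHr].
  by apply: (cl_ext ClA) (cl_const ClA 0) _ => x; rewrite big_nil.
have [Pi|nPi] := boolP (P i).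
  by apply: (cl_ext ClA) (cl_add ClA (clF i Pi) IHr) _ => x; rewrite big_cons Pi.
by apply: (cl_ext ClA) IHr _ => x; rewrite big_cons (negbTE nPi).
Qed.

Lemma cl_prod (I : Type) (r : seq I) (P : pred I) (F : I -> D -> K) :
  (forall i, P i -> Cl (F i)) -> Cl (fun x => \prod_(i <- r | P i) F i x).
Proof.
move=> clF; elim: r => [|i r IHr].
  by apply: (cl_ext ClA) (cl_const ClA 1) _ => x; rewrite big_nil.
have [Pi|nPi] := boolP (P i).
  by apply: (cl_ext ClA) (cl_mul ClA (clF i Pi) IHr) _ => x; rewrite big_cons Pi.
by apply: (cl_ext ClA) IHr _ => x; rewrite big_cons (negbTE nPi).
Qed.

Lemma cl_exp f n : Cl f -> Cl (fun x => f x ^+ n).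
Proof.
move=> clf; elim: n => [|n IHn].
  by apply: (cl_ext ClA) (cl_const ClA 1) _ => x; rewrite expr0.
by apply: (cl_ext ClA) (cl_mul ClA clf IHn) _ => x; rewrite exprS.
Qed.

Lemma cl_meval n (p : {mpoly K[n]}) (c : 'I_n -> D -> K) :
  (forall i, Cl (c i)) -> Cl (fun x => p.@[fun i => c i x]).
Proof.
move=> clc.
apply: (cl_ext ClA) (_ : Cl (fun x => \sum_(m <- msupp p) p@_m * \prod_i c i x ^+ m i)) _.
  by apply: cl_sum => m _; apply/(cl_mul ClA)/cl_prod => [|i _]; [apply: cl_const | apply: cl_exp].
by move=> x; rewrite mevalE.
Qed.

Definition clmx m n (A : D -> 'M[K]_(m, n)) := forall i j, Cl (fun x => A x i j).

Lemma clmx_const m n (A : 'M[K]_(m, n)) : clmx (fun _ => A).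
Proof. by move=> i j; apply: cl_const. Qed.

Lemma clmx_mul m n p (A : D -> 'M[K]_(m, n)) (B : D -> 'M[K]_(n, p)) :
  clmx A -> clmx B -> clmx (fun x => A x *m B x).
Proof.
move=> clA clB i j; apply: (cl_ext ClA) (_ : Cl (fun x => \sum_k A x i k * B x k j)) _.
  by apply: cl_sum => k _; apply: cl_mul.
by move=> x; rewrite mxE.
Qed.

Lemma clmx_tr m n (A : D -> 'M[K]_(m, n)) : clmx A -> clmx (fun x => (A x)^T).
Proof. by move=> clA i j; apply: (cl_ext ClA) (clA j i) _ => x; rewrite mxE. Qed.

Lemma cl_det n (A : D -> 'M[K]_n) : clmx A -> Cl (fun x => \det (A x)).
Proof.
move=> clA; apply: cl_sum => s _.
by apply/(cl_mul ClA)/cl_prod => [|i _]; [apply: cl_const | apply: clA].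
Qed.

Lemma cl_trace n (A : D -> 'M[K]_n) : clmx A -> Cl (fun x => \tr (A x)).
Proof. by move=> clA; apply: cl_sum => i _; apply: clA. Qed.

Lemma clmx_col3 f1 f2 f3 : Cl f1 -> Cl f2 -> Cl f3 ->
  clmx (fun x => col3 (f1 x) (f2 x) (f3 x)).
Proof.
move=> cl1 cl2 cl3 i j; rewrite [j]ord1.
by case: (ord3_cases i) => ->;
  [apply: (cl_ext ClA) cl1 _ | apply: (cl_ext ClA) cl2 _ | apply: (cl_ext ClA) cl3 _];
  move=> x; rewrite mxE.
Qed.

Lemma clmx_mx3 f1 f2 f3 f4 f5 f6 f7 f8 f9 :
  Cl f1 -> Cl f2 -> Cl f3 -> Cl f4 -> Cl f5 -> Cl f6 -> Cl f7 -> Cl f8 -> Cl f9 ->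
  clmx (fun x => mx3 (f1 x) (f2 x) (f3 x) (f4 x) (f5 x) (f6 x) (f7 x) (f8 x) (f9 x)).
Proof.
move=> cl1 cl2 cl3 cl4 cl5 cl6 cl7 cl8 cl9 i j.
by case: (ord3_cases i) => ->; case: (ord3_cases j) => ->;
  [ apply: (cl_ext ClA) cl1 _ | apply: (cl_ext ClA) cl2 _ | apply: (cl_ext ClA) cl3 _
  | apply: (cl_ext ClA) cl4 _ | apply: (cl_ext ClA) cl5 _ | apply: (cl_ext ClA) cl6 _
  | apply: (cl_ext ClA) cl7 _ | apply: (cl_ext ClA) cl8 _ | apply: (cl_ext ClA) cl9 _ ];
  move=> x; rewrite mxE.
Qed.

End FunSubalgebra.

Section PolynomialFunctions.
Variable K : comNzRingType.

Definition upolyfun (f : K -> K) := exists p : {poly K}, forall x, p.[x] = f x.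
Definition polyfun n (f : ('I_n -> K) -> K) := exists p : {mpoly K[n]}, forall t, p.@[t] = f t.

Lemma upolyfun_subalgebra : fun_subalgebra upolyfun.
Proof.
split=> [f g [p Hp] fg | c | f g [p Hp] [q Hq] | f g [p Hp] [q Hq]].
- by exists p => x; rewrite Hp.
- by exists c%:P => x; rewrite hornerC.
- by exists (p + q) => x; rewrite hornerD Hp Hq.
- by exists (p * q) => x; rewrite hornerM Hp Hq.
Qed.

Lemma upolyfun_id : upolyfun id.
Proof. by exists 'X => x; rewrite hornerX. Qed.

Lemma polyfun_subalgebra n : fun_subalgebra (@polyfun n).
Proof.
split=> [f g [p Hp] fg | c | f g [p Hp] [q Hq] | f g [p Hp] [q Hq]].
- by exists p => t; rewrite Hp.
- by exists c%:MP => t; rewrite mevalC.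
- by exists (p + q) => t; rewrite mevalD Hp Hq.
- by exists (p * q) => t; rewrite mevalM Hp Hq.
Qed.

Lemma polyfun_coord n i : @polyfun n (fun t => t i).
Proof. by exists 'X_i => t; rewrite mevalXU. Qed.

End PolynomialFunctions.

Section PolynomialFunctionsOverNumDomain.
Variable K : numDomainType.

Lemma poly_nonroot (p : {poly K}) : p != 0 -> exists x, p.[x] != 0.
Proof.
move=> p0; pose s := [seq i%:R : K | i <- iota 0 (size p)].
have /allPn[x _ px] : ~~ all (root p) s.
  apply/negP => /(max_poly_roots p0) lt_size.
  suff /lt_size : uniq s by rewrite size_map size_iota ltnn.
  by rewrite map_inj_uniq ?iota_uniq // => i j /eqP; rewrite eqr_nat => /eqP.
by exists x.
Qed.

Lemma upolyfun_mulf_neq0 (f g : K -> K) x y : upolyfun f -> upolyfun g ->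
  f x != 0 -> g y != 0 -> exists z, f z * g z != 0.
Proof.
move=> [p Hp] [q Hq]; rewrite -Hp -Hq => px qy.
have p0 : p != 0 by apply: contraNneq px => ->; rewrite horner0.
have q0 : q != 0 by apply: contraNneq qy => ->; rewrite horner0.
by have [z] := poly_nonroot (mulf_neq0 p0 q0); rewrite hornerM; exists z; rewrite -Hp -Hq.
Qed.

Lemma upolyfun_vanish_dense (f g : K -> K) x : upolyfun f -> upolyfun g -> g x != 0 ->
  (forall y, g y != 0 -> f y = 0) -> forall y, f y = 0.
Proof.
move=> uf ug gx fg y; apply/eqP; apply: contraT => fy.
have [z] := upolyfun_mulf_neq0 uf ug fy gx.
by have [->|/fg->] := eqVneq (g z) 0; rewrite ?mulr0 ?mul0r eqxx.
Qed.

(* Restrict f and g to the line through two witnesses. *)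
Lemma polyfun_mulf_neq0 n (f g : ('I_n -> K) -> K) t1 t2 : polyfun f -> polyfun g ->
  f t1 != 0 -> g t2 != 0 -> exists t, f t * g t != 0.
Proof.
move=> [p Hp] [q Hq] ft1 gt2.
pose c i x := t1 i + x * (t2 i - t1 i).
have UA := @upolyfun_subalgebra K.
have uc i : upolyfun (c i).
  by apply/(cl_add UA)/(cl_mul UA); [apply: cl_const | apply: upolyfun_id | apply: cl_const].
have [||x] := upolyfun_mulf_neq0 (x := 0) (y := 1) (cl_meval UA p uc) (cl_meval UA q uc).
- by rewrite (@meval_eq _ _ _ t1) ?Hp // => i; rewrite /c mul0r addr0.
- by rewrite (@meval_eq _ _ _ t2) ?Hq // => i; rewrite /c mul1r addrC subrK.
by rewrite Hp Hq; exists (fun i => c i x).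
Qed.

Lemma polyfun_vanish_dense n (f g : ('I_n -> K) -> K) t0 : polyfun f -> polyfun g ->
  g t0 != 0 -> (forall t, g t != 0 -> f t = 0) -> forall t, f t = 0.
Proof.
move=> pf pg gt0 fg t; apply/eqP; apply: contraT => ft.
have [s] := polyfun_mulf_neq0 pf pg ft gt0.
by have [->|/fg->] := eqVneq (g s) 0; rewrite ?mulr0 ?mul0r eqxx.
Qed.

Lemma polyfun_prod_neq0 n (I : Type) (r : seq I) (F : I -> ('I_n -> K) -> K) :
  (forall i, polyfun (F i)) -> (forall i, exists t, F i t != 0) ->
  exists t, \prod_(i <- r) F i t != 0.
Proof.
move=> pF nzF; elim: r => [|i r [t IHr]].
  by exists (fun _ => 0); rewrite big_nil oner_eq0.
have [s Fis] := nzF i.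
have pprod := cl_prod (polyfun_subalgebra K n) r (fun j (_ : xpredT j) => pF j).
have [u] := polyfun_mulf_neq0 (pF i) pprod Fis IHr.
by exists u; rewrite big_cons.
Qed.

End PolynomialFunctionsOverNumDomain.

Section Coordinates.
Variable K : fieldType.
Implicit Type z : pt K.

Definition idx_v (k : 'I_3) : 'I_15 := inord k.
Definition idx_w (k : 'I_3) : 'I_15 := inord (3 + k).
Definition idx_C (b a : 'I_3) : 'I_15 := inord (6 + 3 * b + a).

Lemma coords_idx_v z k : coords z (idx_v k) = z.1.1 k 0.
Proof.
case: z => [[v w] C] /=; rewrite /idx_v inordK; last by have := ltn_ord k; lia.
by rewrite ltn_ord inord_val.
Qed.

Lemma coords_idx_w z k : coords z (idx_w k) = z.1.2 k 0.
Proof.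
case: z => [[v w] C] /=; rewrite /idx_w inordK; last by have := ltn_ord k; lia.
have -> : (3 + k < 3)%N = false by lia.
by rewrite ifT ?addKn ?inord_val //; have := ltn_ord k; lia.
Qed.

Lemma coords_idx_C z b a : coords z (idx_C b a) = z.2 b a.
Proof.
case: z => [[v w] C] /=; rewrite /idx_C inordK; last by have := ltn_ord a; have := ltn_ord b; lia.
have -> : (6 + 3 * b + a < 3)%N = false by lia.
have -> : (6 + 3 * b + a < 6)%N = false by lia.
have -> : (6 + 3 * b + a - 6 = b * 3 + a)%N by lia.
by rewrite divnMDl // modnMDl divn_small ?modn_small // addn0 !inord_val.
Qed.

Lemma coordsE z (i : 'I_15) : coords z i =
  if (i < 3)%N then z.1.1 (inord i) 0 else if (i < 6)%N then z.1.2 (inord (i - 3)) 0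
  else z.2 (inord ((i - 6) %/ 3)) (inord ((i - 6) %% 3)).
Proof. by case: z => [[v w] C]. Qed.

Lemma actE g1 g2 z : act g1 g2 z = (g1 *m z.1.1, g2 *m z.1.2, g2 *m z.2 *m invmx g1).
Proof. by case: z => [[v w] C]. Qed.

End Coordinates.

Section ClosedClassPoints.
Variables (K : fieldType) (D : Type) (Cl : (D -> K) -> Prop) (ClA : fun_subalgebra Cl).

Definition clpt (Z : D -> pt K) := forall i, Cl (fun x => coords (Z x) i).

Lemma clpt_v Z : clpt Z -> clmx Cl (fun x => (Z x).1.1).
Proof.
move=> clZ i j; rewrite [j]ord1.
by apply: (cl_ext ClA) (clZ (idx_v i)) _ => x; rewrite coords_idx_v.
Qed.

Lemma clpt_w Z : clpt Z -> clmx Cl (fun x => (Z x).1.2).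
Proof.
move=> clZ i j; rewrite [j]ord1.
by apply: (cl_ext ClA) (clZ (idx_w i)) _ => x; rewrite coords_idx_w.
Qed.

Lemma clpt_C Z : clpt Z -> clmx Cl (fun x => (Z x).2).
Proof. by move=> clZ i j; apply: (cl_ext ClA) (clZ (idx_C i j)) _ => x; rewrite coords_idx_C. Qed.

Lemma clpt_triple (V W : D -> 'cV[K]_3) (C : D -> 'M[K]_3) :
  clmx Cl V -> clmx Cl W -> clmx Cl C -> clpt (fun x => (V x, W x, C x)).
Proof.
move=> clV clW clC i; apply: (cl_ext ClA) (_ : Cl (fun x => if (i < 3)%N then V x (inord i) 0
   else if (i < 6)%N then W x (inord (i - 3)) 0
   else C x (inord ((i - 6) %/ 3)) (inord ((i - 6) %% 3)))) _.
  by case: (i < 3)%N; last case: (i < 6)%N.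
by move=> x; rewrite coordsE.
Qed.

Lemma clpt_act g1 g2 Z : clpt Z -> clpt (fun x => act g1 g2 (Z x)).
Proof.
have cl_mx := clmx_mul ClA; have cl_cst := clmx_const ClA.
move=> clZ.
have clZ' : clpt (fun x => (g1 *m (Z x).1.1, g2 *m (Z x).1.2, g2 *m (Z x).2 *m invmx g1)).
  apply: clpt_triple; first (by apply/cl_mx/clpt_v); first (by apply/cl_mx/clpt_w).
  by apply/cl_mx/cl_cst; apply/cl_mx/clpt_C.
by move=> i; apply: (cl_ext ClA) (clZ' i) _ => x; rewrite actE.
Qed.

Lemma cl_ev (p : polyL K) Z : clpt Z -> Cl (fun x => ev p (Z x)).
Proof. exact: cl_meval. Qed.

End ClosedClassPoints.

Section Groups.
Variable K : fieldType.
Implicit Types (g h : 'M[K]_3) (z : pt K).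

Lemma SO3_unit g : SO3 g -> g \in unitmx.
Proof. by case=> /mulmx1_unit[]. Qed.

Lemma SO3_inv g : SO3 g -> invmx g = g^T.
Proof.
by move=> [gTg _]; rewrite -[LHS]mul1mx -gTg -mulmxA mulmxV ?mulmx1 // (mulmx1_unit gTg).2.
Qed.

Lemma SO3_mulKmx g m (A : 'M[K]_(3, m)) : SO3 g -> g^T *m (g *m A) = A.
Proof. by case=> gTg _; rewrite mulmxA gTg mul1mx. Qed.

Lemma SO3_1 : SO3 (1%:M : 'M[K]_3).
Proof. by split; rewrite ?trmx1 ?mulmx1 ?det1. Qed.

Lemma SO3_mul g h : SO3 g -> SO3 h -> SO3 (g *m h).
Proof.
move=> [gTg dg] [hTh dh]; split; last by rewrite det_mulmx dg dh mulr1.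
by rewrite trmx_mul mulmxA -(mulmxA h^T) gTg mulmx1 hTh.
Qed.

Lemma act_mul g1 g2 h1 h2 z : SO3 g1 -> SO3 h1 ->
  act g1 g2 (act h1 h2 z) = act (g1 *m h1) (g2 *m h2) z.
Proof.
move=> g1SO h1SO; rewrite !actE /= (SO3_inv g1SO) (SO3_inv h1SO).
by rewrite (SO3_inv (SO3_mul g1SO h1SO)) trmx_mul !mulmxA.
Qed.

Lemma act1 z : act 1%:M 1%:M z = z.
Proof. by case: z => [[v w] C]; rewrite /= invmx1 !mul1mx mulmx1. Qed.

Lemma embed2E (A : 'M[K]_2) :
  embed2 A = mx3 (A 0 0) (A 0 1) 0 (A 1 0) (A 1 1) 0 0 0 (\det A).
Proof.
have E0 : (0 : 'I_(2 + 1)) = lshift 1 (0 : 'I_2) by apply: val_inj.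
have E1 : (1 : 'I_(2 + 1)) = lshift 1 (1 : 'I_2) by apply: val_inj.
have E2 : (2 : 'I_(2 + 1)) = rshift 2 (0 : 'I_1) by apply: val_inj.
apply/matrixP => i j; rewrite [RHS]mxE.
case: (ord3_cases i) => ->; case: (ord3_cases j) => ->; rewrite /= ?E2 ?E0 ?E1 /embed2;
  rewrite ?(@block_mxEul K 2 1 2 1) ?(@block_mxEur K 2 1 2 1)
    ?(@block_mxEdl K 2 1 2 1) ?(@block_mxEdr K 2 1 2 1) ?mxE //.
Qed.

Lemma embed2_SO3 (A : 'M[K]_2) : A^T *m A = 1%:M -> SO3 (embed2 A).
Proof.
move=> ATA; have dA : \det A * \det A = 1 by rewrite -{1}det_tr -det_mulmx ATA det1.
split; last by rewrite /embed2 (@det_ublock K 2 1) det_scalar1.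
change ((block_mx A 0 0 (\det A)%:M : 'M_(2 + 1))^T *m block_mx A 0 0 (\det A)%:M = 1%:M).
rewrite tr_block_mx !trmx0 tr_scalar_mx mulmx_block.
rewrite !(mulmx0, mul0mx, addr0, add0r) ATA -scalar_mxM dA.
by rewrite -(@scalar_mx_block K 2 1).
Qed.

Lemma perm2_cases (s : 'S_2) : (s 0 = 0 /\ s 1 = 1) \/ (s 0 = 1 /\ s 1 = 0).
Proof.
case: (ord2_cases (s 0)) => s0; case: (ord2_cases (s 1)) => s1; [|by left|by right|];
  by move: (perm_inj (etrans s0 (esym s1))).
Qed.

Definition is_sign (x : K) := x = 1 \/ x = -1.

Lemma is_sign_signr (b : bool) : is_sign ((-1) ^+ b).
Proof. by case: b; [right; rewrite expr1 | left; rewrite expr0]. Qed.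

Lemma is_signM x y : is_sign x -> is_sign y -> is_sign (x * y).
Proof. by case=> ->; case=> ->; rewrite ?mulr1 ?mul1r ?mulrNN ?mulr1; [left|right|right|left]. Qed.

Lemma is_signN x : is_sign x -> is_sign (- x).
Proof. by case=> ->; rewrite ?opprK; [right | left]. Qed.

Lemma is_sign_sqr x : is_sign x -> x * x = 1.
Proof. by case=> ->; rewrite ?mulr1 ?mulrNN ?mulr1. Qed.

Lemma signed_perm_orthogonal s (A : 'M[K]_2) : signed_perm s A -> A^T *m A = 1%:M.
Proof.
move=> sA; have A00 := sA 0 0; have A01 := sA 0 1; have A10 := sA 1 0; have A11 := sA 1 1.
rewrite [A]mx2E tr_mx2 mul_mx2 scalar_mx2.
case: (perm2_cases s) => [[-> ->]|[-> ->]] /= in A00 A01 A10 A11 *.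
- by rewrite A01 A10 !(mulr0, mul0r, addr0, add0r) !is_sign_sqr.
- by rewrite A00 A11 !(mulr0, mul0r, addr0, add0r) !is_sign_sqr.
Qed.

Lemma inN_inG g1 g2 : inN g1 g2 -> inG g1 g2.
Proof.
by move=> [s [A1 [A2 [/signed_perm_orthogonal A1O /signed_perm_orthogonal A2O -> ->]]]];
  split; apply: embed2_SO3.
Qed.

End Groups.

Section PointFunctions.
Variable K : fieldType.

Definition ptpolyfun (f : pt K -> K) := exists p : polyL K, forall z, ev p z = f z.

Lemma ptpolyfun_subalgebra : fun_subalgebra ptpolyfun.
Proof.
split=> [f g [p Hp] fg | c | f g [p Hp] [q Hq] | f g [p Hp] [q Hq]].
- by exists p => z; rewrite Hp.
- by exists c%:MP => z; rewrite /ev mevalC.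
- by exists (p + q) => z; rewrite /ev mevalD -/(ev p z) -/(ev q z) Hp Hq.
- by exists (p * q) => z; rewrite /ev mevalM -/(ev p z) -/(ev q z) Hp Hq.
Qed.

Lemma clpt_id : clpt ptpolyfun id.
Proof. by move=> i; exists 'X_i => z; rewrite /ev mevalXU. Qed.

Lemma ptpolyfun_ev_act (p : polyL K) g1 g2 : ptpolyfun (fun z => ev p (act g1 g2 z)).
Proof. exact/(cl_ev ptpolyfun_subalgebra)/(clpt_act ptpolyfun_subalgebra)/clpt_id. Qed.

End PointFunctions.

Section Slice.
Variable K : fieldType.

Definition slice (t : 'I_5 -> K) : pt K :=
  (col3 0 0 (t 0), col3 0 0 (t 1), mx3 (t 2) 0 0 0 (t 3) 0 0 0 (t 4)).

Lemma SsubP (z : pt K) : Ssub z <-> exists t, z = slice t.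
Proof.
split=> [[x [y [l ->]]] | [t ->]].
  exists (fun k : 'I_5 => nth 0 [:: x; y; l 0 0; l 0 1; l 0 2] k).
  by congr (_, _, _); rewrite [LHS]col3E || rewrite [LHS]mx3E; rewrite !mxE.
exists (t 0), (t 1), (\row_(i < 3) nth 0 [:: t 2; t 3; t 4] i).
by congr (_, _, _); rewrite [RHS]col3E || rewrite [RHS]mx3E; rewrite !mxE.
Qed.

Lemma slice_Ssub t : Ssub (slice t).
Proof. by apply/SsubP; exists t. Qed.

Lemma Ssub_X2 (z : pt K) : Ssub z -> X2 z.
Proof.
move=> /SsubP[t ->] p; apply; exists 1%:M, 1%:M, (slice t).
split; [by split; apply: SO3_1 | | by rewrite act1].
rewrite /X0 /slice !mxE /=; split=> // b a.
by case: (ord3_cases b) => ->; case: (ord3_cases a) => ->; rewrite mxE.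
Qed.

Lemma ratfun_on_subset (Y Z : pt K -> Prop) (p q : polyL K) :
  (forall z, Y z -> Z z) -> ratfun_on Y p q -> ratfun_on Z p q.
Proof. by move=> YZ Yq Zq; apply: Yq => z /YZ; apply: Zq. Qed.

Lemma ratfun_on_slice (p q : polyL K) : ratfun_on (@Ssub K) p q -> exists t, ev q (slice t) != 0.
Proof.
move=> Sq; apply: NNPP => nq; apply: Sq => _ /SsubP[t ->].
by apply/eqP; apply: contraT => qt; case: nq; exists t.
Qed.

Lemma clpt_slice : clpt (@polyfun K 5) slice.
Proof.
have PA := polyfun_subalgebra K 5.
have cst c : polyfun (fun _ : 'I_5 -> K => c) := cl_const PA c.
by apply: (clpt_triple PA); [apply: (clmx_col3 PA) .. | apply: (clmx_mx3 PA)];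
  apply: cst || apply: polyfun_coord.
Qed.

Lemma polyfun_ev_act_slice (p : polyL K) g1 g2 : polyfun (fun t => ev p (act g1 g2 (slice t))).
Proof. exact/(cl_ev (polyfun_subalgebra K 5))/(clpt_act (polyfun_subalgebra K 5))/clpt_slice. Qed.

Lemma polyfun_ev_slice (p : polyL K) : polyfun (fun t => ev p (slice t)).
Proof.
by apply: (cl_ext (polyfun_subalgebra K 5)) (polyfun_ev_act_slice p 1%:M 1%:M) _ => t; rewrite act1.
Qed.

End Slice.

Section RotationDecomposition.
Variable K : numClosedFieldType.

Lemma half_angle (wc ws : K) : wc ^+ 2 + ws ^+ 2 = 1 ->
  exists c s : K, [/\ c ^+ 2 + s ^+ 2 = 1, c ^+ 2 - s ^+ 2 = wc & 2 * c * s = ws].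
Proof.
move=> w1; have [wc_m1|wc_nm1] := eqVneq (1 + wc) 0.
  have wcE : wc = -1 by apply/eqP; rewrite -subr_eq0 opprK addrC wc_m1.
  rewrite wcE in w1 *.
  have /eqP : ws ^+ 2 = 0 by rewrite -(subrr (1 : K)) -{1}w1; ring.
  by rewrite expf_eq0 /= => /eqP ->; exists 0, 1; split; ring.
have two0 : (2 : K) != 0 by rewrite pnatr_eq0.
pose c := sqrtC ((1 + wc) / 2).
have c2 : c ^+ 2 = (1 + wc) / 2 by rewrite sqrtCK.
have c0 : c != 0 by rewrite sqrtC_eq0 mulf_neq0 ?invr_eq0.
have ws2 : ws ^+ 2 = (1 - wc) * (1 + wc) by rewrite -[ws ^+ 2](addKr (wc ^+ 2)) w1; ring.
exists c, (ws / (2 * c)); split; last by field.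
- have -> : c ^+ 2 + (ws / (2 * c)) ^+ 2 = c ^+ 2 + ws ^+ 2 / (4 * c ^+ 2) by field.
  by rewrite c2 ws2; field.
- have -> : c ^+ 2 - (ws / (2 * c)) ^+ 2 = c ^+ 2 - ws ^+ 2 / (4 * c ^+ 2) by field.
  by rewrite c2 ws2; field.
Qed.

(* [(c1, s1)] is the angle of [(c2, s2)] minus the angle of [(Cm, Sm)]; the
   angle of [(c2, s2)] is half the sum of those of [(Cm, Sm)] and [(Cp, Sp)]. *)
Lemma rot_angle_split (c2 s2 Cm Sm Cp Sp : K) :
  c2 ^+ 2 + s2 ^+ 2 = 1 -> c2 ^+ 2 - s2 ^+ 2 = Cp * Cm - Sp * Sm ->
  2 * c2 * s2 = Cp * Sm + Sp * Cm -> Cm ^+ 2 + Sm ^+ 2 = 1 ->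
  let c1 := c2 * Cm + s2 * Sm in let s1 := s2 * Cm - c2 * Sm in
  [/\ c1 * c2 + s1 * s2 = Cm, s2 * c1 - c2 * s1 = Sm,
      c1 * c2 - s1 * s2 = Cp, s2 * c1 + c2 * s1 = Sp & c1 ^+ 2 + s1 ^+ 2 = 1].
Proof.
move=> u2 cos2 sin2 um c1 s1; split.
- by rewrite -[RHS]mulr1 -u2 /c1 /s1; ring.
- by rewrite -[RHS]mulr1 -u2 /c1 /s1; ring.
- rewrite -[RHS]mulr1 -um.
  transitivity (Cm * (c2 ^+ 2 - s2 ^+ 2) + Sm * (2 * c2 * s2)); first by rewrite /c1 /s1; ring.
  by rewrite cos2 sin2; ring.
- rewrite -[RHS]mulr1 -um.
  transitivity (Cm * (2 * c2 * s2) - Sm * (c2 ^+ 2 - s2 ^+ 2)); first by rewrite /c1 /s1; ring.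
  by rewrite cos2 sin2; ring.
- by rewrite -(mulr1 1) -{1}u2 -um /c1 /s1; ring.
Qed.

Lemma unit_circle_normalize (a b : K) : a ^+ 2 + b ^+ 2 != 0 ->
  exists r, [/\ r != 0, r ^+ 2 = a ^+ 2 + b ^+ 2 & (a / r) ^+ 2 + (b / r) ^+ 2 = 1].
Proof.
move=> ab0; exists (sqrtC (a ^+ 2 + b ^+ 2)); rewrite sqrtC_eq0 sqrtCK; split=> //.
by rewrite !expr_div_n -mulrDl sqrtCK divff.
Qed.

(* Complex singular value decomposition of a 2 x 2 block by two rotations. *)
Lemma rot_decomposition (m11 m12 m21 m22 : K) :
  (m11 + m22) ^+ 2 + (m21 - m12) ^+ 2 != 0 -> (m11 - m22) ^+ 2 + (m21 + m12) ^+ 2 != 0 ->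
  exists c1 s1 c2 s2 l1 l2 : K,
  [/\ c1 ^+ 2 + s1 ^+ 2 = 1, c2 ^+ 2 + s2 ^+ 2 = 1 &
      [/\ m11 = c2 * c1 * l1 + s2 * s1 * l2, m12 = c2 * s1 * l1 - s2 * c1 * l2,
          m21 = s2 * c1 * l1 - c2 * s1 * l2 & m22 = s2 * s1 * l1 + c2 * c1 * l2]].
Proof.
move=> /unit_circle_normalize[mu [mu0 _ um]] /unit_circle_normalize[nu [nu0 _ up]].
set Cm := _ / mu in um; set Sm := _ / mu in um; set Cp := _ / nu in up; set Sp := _ / nu in up.
have uw : (Cp * Cm - Sp * Sm) ^+ 2 + (Cp * Sm + Sp * Cm) ^+ 2 = 1.
  by rewrite -(mulr1 1) -{1}up -um; ring.
have [c2 [s2 [u2 cos2 sin2]]] := half_angle uw.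
have [] := rot_angle_split u2 cos2 sin2 um.
move: (c2 * Cm + s2 * Sm) (s2 * Cm - c2 * Sm) => c1 s1 E1 E2 E3 E4 u1.
exists c1, s1, c2, s2, ((mu + nu) / 2), ((mu - nu) / 2); split=> //.
have two0 : (2 : K) != 0 by rewrite pnatr_eq0.
split.
- transitivity ((c1 * c2 + s1 * s2) * mu / 2 + (c1 * c2 - s1 * s2) * nu / 2); last by ring.
  by rewrite E1 E3 /Cm /Cp; field; rewrite mu0 nu0.
- transitivity (- (s2 * c1 - c2 * s1) * mu / 2 + (s2 * c1 + c2 * s1) * nu / 2); last by ring.
  by rewrite E2 E4 /Sm /Sp; field; rewrite mu0 nu0.
- transitivity ((s2 * c1 - c2 * s1) * mu / 2 + (s2 * c1 + c2 * s1) * nu / 2); last by ring.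
  by rewrite E2 E4 /Sm /Sp; field; rewrite mu0 nu0.
- transitivity ((c1 * c2 + s1 * s2) * mu / 2 - (c1 * c2 - s1 * s2) * nu / 2); last by ring.
  by rewrite E1 E3 /Cm /Cp; field; rewrite mu0 nu0.
Qed.

End RotationDecomposition.

Section Density.
Variable K : numClosedFieldType.

Definition rot (c s : K) : 'M[K]_2 := mx2 c (- s) s c.

Lemma rot_SO3 c s : c ^+ 2 + s ^+ 2 = 1 -> SO3 (embed2 (rot c s)).
Proof.
by move=> cs1; apply: embed2_SO3; rewrite tr_mx2 mul_mx2 scalar_mx2 -cs1; congr mx2; ring.
Qed.

Definition blockpt (x y m11 m12 m21 m22 c : K) : pt K :=
  (col3 0 0 x, col3 0 0 y, mx3 m11 m12 0 m21 m22 0 0 0 c).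

Lemma X0_blockpt (z : pt K) : X0 z ->
  exists x y m11 m12 m21 m22 c, z = blockpt x y m11 m12 m21 m22 c.
Proof.
case: z => [[v w] C] [v0 v1 w0 w1 C0].
exists (v 2 0), (w 2 0), (C 0 0), (C 0 1), (C 1 0), (C 1 1), (C 2 2).
have Ev : v = col3 0 0 (v 2 0) by rewrite [LHS]col3E v0 v1.
have Ew : w = col3 0 0 (w 2 0) by rewrite [LHS]col3E w0 w1.
have EC : C = mx3 (C 0 0) (C 0 1) 0 (C 1 0) (C 1 1) 0 0 0 (C 2 2).
  by rewrite [LHS]mx3E (C0 0 2) ?(C0 1 2) ?(C0 2 0) ?(C0 2 1).
by rewrite /blockpt -Ev -Ew -EC.
Qed.

Lemma act_rot_slice c1 s1 c2 s2 (t : 'I_5 -> K) :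
  c1 ^+ 2 + s1 ^+ 2 = 1 -> c2 ^+ 2 + s2 ^+ 2 = 1 ->
  act (embed2 (rot c1 s1)) (embed2 (rot c2 s2)) (slice t) =
  blockpt (t 0) (t 1) (c2 * c1 * t 2 + s2 * s1 * t 3) (c2 * s1 * t 2 - s2 * c1 * t 3)
          (s2 * c1 * t 2 - c2 * s1 * t 3) (s2 * s1 * t 2 + c2 * c1 * t 3) (t 4).
Proof.
move=> cs1 cs2; rewrite actE (SO3_inv (rot_SO3 cs1)) /slice /= !embed2E /rot !det_mx2 !mxE /=.
have -> : c1 * c1 - - s1 * s1 = 1 by rewrite -cs1; ring.
have -> : c2 * c2 - - s2 * s2 = 1 by rewrite -cs2; ring.
rewrite tr_mx3 !mul_mx3_col3 !mul_mx3 /blockpt.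
by congr (_, _, _); [congr col3 | congr col3 | congr mx3]; ring.
Qed.

Lemma blockpt_in_GS x y m11 m12 m21 m22 c :
  (m11 + m22) ^+ 2 + (m21 - m12) ^+ 2 != 0 -> (m11 - m22) ^+ 2 + (m21 + m12) ^+ 2 != 0 ->
  exists g1 g2 t, inG g1 g2 /\ blockpt x y m11 m12 m21 m22 c = act g1 g2 (slice t).
Proof.
move=> Na Nb; have [c1 [s1 [c2 [s2 [l1 [l2 [cs1 cs2 [-> -> -> ->]]]]]]]] := rot_decomposition Na Nb.
exists (embed2 (rot c1 s1)), (embed2 (rot c2 s2)), (fun k => nth 0 [:: x; y; l1; l2; c] k).
by split; [split; apply: rot_SO3 | rewrite act_rot_slice].
Qed.

Lemma sqr_add_sqr_neq0 (a b : K) : exists x, (x + a) ^+ 2 + b ^+ 2 != 0.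
Proof.
have [b0|b0] := eqVneq (b ^+ 2) 0.
  by exists (1 - a); rewrite b0 addr0 subrK expr1n oner_eq0.
by exists (- a); rewrite addNr expr0n add0r.
Qed.

(* Perturbing [m11] to [m11 + tau] makes both conditions of [blockpt_in_GS]
   nonzero polynomials in [tau], which is why [G . S] is dense in [X2]. *)
Lemma X2_vanish (F : polyL K) :
  (forall g1 g2 t, inG g1 g2 -> ev F (act g1 g2 (slice t)) = 0) -> vanish_on (@X2 K) (ev F).
Proof.
move=> FGS z; apply=> _ [g1 [g2 [z0 [[g1SO g2SO] X0z0 ->]]]].
have [x [y [m11 [m12 [m21 [m22 [c ->]]]]]]] := X0_blockpt X0z0.
have UA := @upolyfun_subalgebra K.
have uquad (a b : K) : upolyfun (fun tau => (tau + a) ^+ 2 + b ^+ 2).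
  apply/(cl_add UA)/(cl_const UA)/(cl_exp UA)/(cl_add UA)/(cl_const UA).
  exact: upolyfun_id.
pose Phi tau := ev F (act g1 g2 (blockpt x y (m11 + tau) m12 m21 m22 c)).
have uPhi : upolyfun Phi.
  apply/(cl_ev UA)/(clpt_act UA)/(clpt_triple UA); try exact: clmx_const.
  apply: (clmx_mx3 UA); try exact: (cl_const UA).
  by apply/(cl_add UA)/upolyfun_id; apply: cl_const.
have [a Na] := sqr_add_sqr_neq0 (m11 + m22) (m21 - m12).
have [b Nb] := sqr_add_sqr_neq0 (m11 - m22) (m21 + m12).
have [tau0 NaNb] := upolyfun_mulf_neq0 (uquad _ _) (uquad _ _) Na Nb.
suff /(_ 0) : forall tau, Phi tau = 0 by rewrite /Phi addr0.
apply: (upolyfun_vanish_dense uPhi (cl_mul UA (uquad _ _) (uquad _ _)) NaNb) => tau.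
rewrite mulf_eq0 negb_or /Phi => /andP[Na_tau Nb_tau].
have [||h1 [h2 [t [[h1SO h2SO] ->]]]] := @blockpt_in_GS x y (m11 + tau) m12 m21 m22 c.
- by rewrite (_ : m11 + tau + m22 = tau + (m11 + m22)) //; ring.
- by rewrite (_ : m11 + tau - m22 = tau + (m11 - m22)) //; ring.
by rewrite act_mul // FGS //; split; apply: SO3_mul.
Qed.

End Density.

Lemma cross_mul_transfer (K : idomainType) (a1 b1 a2 b2 a1' b1' a2' b2' : K) :
  b1 != 0 -> b2 != 0 -> a1' * b1 = a1 * b1' -> a2' * b2 = a2 * b2' -> a1 * b2 = a2 * b1 ->
  a1' * b2' = a2' * b1'.
Proof.
move=> b1_0 b2_0 e1 e2 e12; apply: (mulIf (mulf_neq0 b1_0 b2_0)).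
transitivity ((a1' * b1) * (b2' * b2)); first by ring.
transitivity ((a2' * b2) * (b1' * b1)); last by ring.
rewrite e1 e2; transitivity ((a1 * b2) * (b1' * b2')); first by ring.
by rewrite e12; ring.
Qed.

Section Restriction.
Variable K : numClosedFieldType.
Local Notation X := (@X2 K).
Local Notation S := (@Ssub K).

Lemma restriction_defined (p q : polyL K) :
  ratfun_on X p q -> invariant_on X (@inG K) p q ->
  exists p' q' : polyL K, [/\ ratfun_on X p' q', same_on X p q p' q' & ratfun_on S p' q'].
Proof.
move=> Xq pqG.
have [g1 [g2 [t [g12 qgt]]]] : exists g1 g2 t, inG g1 g2 /\ ev q (act g1 g2 (slice t)) != 0.
  apply: NNPP => nq; apply: Xq; apply: X2_vanish => g1 g2 t g12.
  by apply/eqP; apply: contraT => qgt; case: nq; exists g1, g2, t.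
have [p' p'E] := ptpolyfun_ev_act p g1 g2.
have [q' q'E] := ptpolyfun_ev_act q g1 g2.
have Sq' : ratfun_on S p' q' by move=> /(_ _ (slice_Ssub t)) /eqP; rewrite q'E (negbTE qgt).
exists p', q'; split=> //; first exact: ratfun_on_subset (@Ssub_X2 K) Sq'.
by move=> z /(pqG _ _ g12) /subr0_eq pqgz; rewrite p'E q'E pqgz subrr.
Qed.

Lemma restriction_invariant (p q : polyL K) :
  invariant_on X (@inG K) p q -> invariant_on S (@inN K) p q.
Proof. by move=> pqG g1 g2 /inN_inG g12 z /Ssub_X2; apply: pqG. Qed.

Lemma restriction_injective (p1 q1 p2 q2 : polyL K) :
  invariant_on X (@inG K) p1 q1 -> ratfun_on S p1 q1 ->
  invariant_on X (@inG K) p2 q2 -> ratfun_on S p2 q2 ->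
  same_on S p1 q1 p2 q2 -> same_on X p1 q1 p2 q2.
Proof.
move=> pq1G /ratfun_on_slice[t1 q1t1] pq2G /ratfun_on_slice[t2 q2t2] pqS z.
have -> : ev p1 z * ev q2 z - ev p2 z * ev q1 z = ev (p1 * q2 - p2 * q1) z.
  by rewrite /ev mevalB !mevalM.
move: z; apply: X2_vanish => g1 g2 t g12.
have pq := cl_mul (polyfun_subalgebra K 5) (polyfun_ev_slice q1) (polyfun_ev_slice q2).
have [t0 qt0] := polyfun_mulf_neq0 (polyfun_ev_slice q1) (polyfun_ev_slice q2) q1t1 q2t2.
move: t; apply: (polyfun_vanish_dense (polyfun_ev_act_slice _ _ _) pq qt0) => t.
rewrite mulf_eq0 negb_or => /andP[q1t q2t].
have St := slice_Ssub t; have Xt := Ssub_X2 St.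
rewrite /ev mevalB !mevalM -!/(ev _ _); apply/eqP; rewrite subr_eq0; apply/eqP.
apply: (cross_mul_transfer q1t q2t); apply: subr0_eq; [exact: pq1G | exact: pq2G | exact: pqS].
Qed.

End Restriction.

Section Invariants.
Variable K : fieldType.
Implicit Types (t : 'I_5 -> K) (phi psi : ('I_5 -> K) -> K).

Definition Ginvariant (p : polyL K) :=
  forall g1 g2 z, inG g1 g2 -> ev p (act g1 g2 z) = ev p z.

Lemma Ginvariant_invariant_on (Y : pt K -> Prop) (p q : polyL K) :
  Ginvariant p -> Ginvariant q -> invariant_on Y (@inG K) p q.
Proof. by move=> Gp Gq g1 g2 g12 z _; rewrite Gp ?Gq // mulrC subrr. Qed.

(* Off [x = 0] and [l3 = 0] one can divide by the restrictions [x ^+ 2] of [|v|^2]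
   and [x ^+ 2 * l3 ^+ 2] of [|C v|^2]. *)
Definition generic t := t 0 != 0 /\ t 4 != 0.

Lemma genericE t : generic t <-> t 0 * t 4 != 0.
Proof. by rewrite mulf_eq0 negb_or; split=> [[-> ->] | /andP[]]. Qed.

Lemma polyfun_generic : polyfun (fun t : 'I_5 -> K => t 0 * t 4).
Proof. by apply: (cl_mul (polyfun_subalgebra K 5)); apply: polyfun_coord. Qed.

Definition liftable phi := exists n d : polyL K, [/\ Ginvariant n, Ginvariant d &
  forall t, generic t -> ev d (slice t) != 0 /\ ev n (slice t) = ev d (slice t) * phi t].

Lemma liftable_ext phi psi : liftable phi -> (forall t, generic t -> phi t = psi t) -> liftable psi.
Proof.
move=> [n [d [Gn Gd ndphi]]] phipsi; exists n, d; split=> // t gt.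
by rewrite -phipsi //; apply: ndphi.
Qed.

Lemma liftable_invariant (f : pt K -> K) phi : ptpolyfun f ->
  (forall g1 g2 z, inG g1 g2 -> f (act g1 g2 z) = f z) -> (forall t, f (slice t) = phi t) ->
  liftable phi.
Proof.
move=> [p pf] fG fphi; exists p, 1; split=> [g1 g2 z g12 | g1 g2 z _ | t _].
- by rewrite !pf fG.
- by rewrite /ev !meval1.
by rewrite /ev meval1 mul1r oner_eq0 -/(ev p _) pf fphi.
Qed.

Lemma liftable_const c : liftable (fun _ => c).
Proof.
apply: (liftable_invariant (f := fun _ => c)) => //.
exact: (cl_const (@ptpolyfun_subalgebra K)).
Qed.

Lemma liftable_mul phi psi : liftable phi -> liftable psi -> liftable (fun t => phi t * psi t).
Proof.
move=> [n1 [d1 [Gn1 Gd1 nd1]]] [n2 [d2 [Gn2 Gd2 nd2]]].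
exists (n1 * n2), (d1 * d2); split=> [g1 g2 z g12 | g1 g2 z g12 | t gt].
- by rewrite /ev !mevalM -!/(ev _ _) Gn1 ?Gn2.
- by rewrite /ev !mevalM -!/(ev _ _) Gd1 ?Gd2.
have [d1t n1t] := nd1 t gt; have [d2t n2t] := nd2 t gt.
by rewrite /ev !mevalM -!/(ev _ _) mulf_neq0 // n1t n2t; split=> //; ring.
Qed.

Lemma liftable_add phi psi : liftable phi -> liftable psi -> liftable (fun t => phi t + psi t).
Proof.
move=> [n1 [d1 [Gn1 Gd1 nd1]]] [n2 [d2 [Gn2 Gd2 nd2]]].
exists (n1 * d2 + n2 * d1), (d1 * d2); split=> [g1 g2 z g12 | g1 g2 z g12 | t gt].
- by rewrite /ev !mevalD !mevalM -!/(ev _ _) Gn1 ?Gn2 ?Gd1 ?Gd2.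
- by rewrite /ev !mevalM -!/(ev _ _) Gd1 ?Gd2.
have [d1t n1t] := nd1 t gt; have [d2t n2t] := nd2 t gt.
by rewrite /ev !mevalD !mevalM -!/(ev _ _) mulf_neq0 // n1t n2t; split=> //; ring.
Qed.

Lemma liftable_inv phi : liftable phi -> (forall t, generic t -> phi t != 0) ->
  liftable (fun t => (phi t)^-1).
Proof.
move=> [n [d [Gn Gd nd]]] phi0; exists d, n; split=> // t gt.
have [dt ->] := nd t gt; rewrite mulf_neq0 ?phi0 //; split=> //.
by field; rewrite phi0.
Qed.

Lemma liftable_exp phi k : liftable phi -> liftable (fun t => phi t ^+ k).
Proof.
move=> Lphi; elim: k => [|k IHk].
  by apply: liftable_ext (liftable_const 1) _ => t _; rewrite expr0.
by apply: liftable_ext (liftable_mul Lphi IHk) _ => t _; rewrite exprS.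
Qed.

Lemma liftable_sum (I : Type) (r : seq I) (F : I -> ('I_5 -> K) -> K) :
  (forall i, liftable (F i)) -> liftable (fun t => \sum_(i <- r) F i t).
Proof.
move=> LF; elim: r => [|i r IHr].
  by apply: liftable_ext (liftable_const 0) _ => t _; rewrite big_nil.
by apply: liftable_ext (liftable_add (LF i) IHr) _ => t _; rewrite big_cons.
Qed.

Local Notation PA := (@ptpolyfun_subalgebra K).

Lemma ptpolyfun_v : clmx (@ptpolyfun K) (fun z => z.1.1).
Proof. exact: (clpt_v PA (@clpt_id K)). Qed.
Lemma ptpolyfun_w : clmx (@ptpolyfun K) (fun z => z.1.2).
Proof. exact: (clpt_w PA (@clpt_id K)). Qed.
Lemma ptpolyfun_C : clmx (@ptpolyfun K) (fun z => z.2).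
Proof. exact: (clpt_C PA (@clpt_id K)). Qed.

Lemma liftable_x2 : liftable (fun t => t 0 ^+ 2).
Proof.
apply: (liftable_invariant (f := fun z => ((z.1.1)^T *m z.1.1) 0 0)).
- exact/(clmx_mul PA)/ptpolyfun_v/(clmx_tr PA)/ptpolyfun_v.
- by move=> g1 g2 z [g1SO _]; rewrite actE /= trmx_mul -mulmxA SO3_mulKmx.
by move=> t; rewrite dot_col3; ring.
Qed.

Lemma liftable_y2 : liftable (fun t => t 1 ^+ 2).
Proof.
apply: (liftable_invariant (f := fun z => ((z.1.2)^T *m z.1.2) 0 0)).
- exact/(clmx_mul PA)/ptpolyfun_w/(clmx_tr PA)/ptpolyfun_w.
- by move=> g1 g2 z [_ g2SO]; rewrite actE /= trmx_mul -mulmxA SO3_mulKmx.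
by move=> t; rewrite dot_col3; ring.
Qed.

Lemma liftable_xyl3 : liftable (fun t => t 0 * t 1 * t 4).
Proof.
apply: (liftable_invariant (f := fun z => ((z.1.2)^T *m z.2 *m z.1.1) 0 0)).
- exact/(clmx_mul PA)/ptpolyfun_v/(clmx_mul PA)/ptpolyfun_C/(clmx_tr PA)/ptpolyfun_w.
- move=> g1 g2 z [g1SO g2SO]; rewrite actE /= trmx_mul -!mulmxA SO3_mulKmx //.
  by rewrite (mulmxA (invmx g1)) mulVmx ?mul1mx ?SO3_unit.
by move=> t; rewrite /slice /= -mulmxA mul_mx3_col3 dot_col3; ring.
Qed.

Lemma liftable_l123 : liftable (fun t => t 2 * t 3 * t 4).
Proof.
apply: (liftable_invariant (f := fun z => \det z.2)).
- exact/(cl_det PA)/ptpolyfun_C.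
- move=> g1 g2 z [[_ dg1] [_ dg2]].
  by rewrite actE /= !det_mulmx det_inv dg1 dg2 invr1 mul1r mulr1.
by move=> t; rewrite det_diag_mx3.
Qed.

Lemma liftable_x2l32 : liftable (fun t => t 0 ^+ 2 * t 4 ^+ 2).
Proof.
apply: (liftable_invariant (f := fun z => ((z.1.1)^T *m (z.2)^T *m z.2 *m z.1.1) 0 0)).
- apply/(clmx_mul PA)/ptpolyfun_v/(clmx_mul PA)/ptpolyfun_C/(clmx_mul PA); apply/(clmx_tr PA).
  + exact: ptpolyfun_v.
  + exact: ptpolyfun_C.
- move=> g1 g2 z [g1SO g2SO]; rewrite actE /= !trmx_mul !SO3_inv // trmxK.
  by rewrite -!mulmxA (SO3_mulKmx _ g1SO) (SO3_mulKmx _ g2SO) (SO3_mulKmx _ g1SO).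
by move=> t; rewrite /slice /= tr_mx3 -!mulmxA !mul_mx3_col3 dot_col3; ring.
Qed.

Lemma liftable_l2_sum : liftable (fun t => t 2 ^+ 2 + t 3 ^+ 2 + t 4 ^+ 2).
Proof.
apply: (liftable_invariant (f := fun z => \tr ((z.2)^T *m z.2))).
- exact/(cl_trace PA)/(clmx_mul PA)/ptpolyfun_C/(clmx_tr PA)/ptpolyfun_C.
- move=> g1 g2 z [g1SO g2SO]; rewrite actE /= !trmx_mul !SO3_inv // trmxK.
  by rewrite -!mulmxA (SO3_mulKmx _ g2SO) mxtrace_mulC -!mulmxA g1SO.1 mulmx1.
by move=> t; rewrite /slice /= tr_mx3 mul_mx3 mxtrace_mx3; ring.
Qed.

End Invariants.

Section LiftableSymmetric.
Variable K : fieldType.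
Implicit Types (t : 'I_5 -> K).

Lemma liftable_l32 : liftable (fun t : 'I_5 -> K => t 4 ^+ 2).
Proof.
apply: liftable_ext (liftable_mul (@liftable_x2l32 K) (liftable_inv (@liftable_x2 K) _)) _.
  by move=> t [t0 t4]; rewrite expf_neq0.
by move=> t [t0 t4]; field.
Qed.

Lemma liftable_l12_sum : liftable (fun t : 'I_5 -> K => t 2 ^+ 2 + t 3 ^+ 2).
Proof.
have L4 := liftable_mul (liftable_const (-1)) liftable_l32.
apply: liftable_ext (liftable_add (@liftable_l2_sum K) L4) _.
by move=> t _; ring.
Qed.

Lemma liftable_l12_prod : liftable (fun t : 'I_5 -> K => t 2 ^+ 2 * t 3 ^+ 2).
Proof.
have L4inv := liftable_inv liftable_l32 (fun t (gt : generic t) => expf_neq0 2 gt.2).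
apply: liftable_ext (liftable_mul (liftable_exp 2 (@liftable_l123 K)) L4inv) _.
by move=> t [t0 t4]; field.
Qed.

Lemma liftable_xyl12 : liftable (fun t : 'I_5 -> K => t 0 * t 1 * t 2 * t 3).
Proof.
have L4inv := liftable_inv liftable_l32 (fun t (gt : generic t) => expf_neq0 2 gt.2).
apply: liftable_ext (liftable_mul (liftable_mul (@liftable_xyl3 K) (@liftable_l123 K)) L4inv) _.
by move=> t [t0 t4]; field.
Qed.

(* Newton's identity [p_(k+2) = e1 p_(k+1) - e2 p_k] for the power sums of
   [t 2 ^+ 2] and [t 3 ^+ 2]. *)
Lemma liftable_power_sum k : liftable (fun t : 'I_5 -> K => (t 2 ^+ 2) ^+ k + (t 3 ^+ 2) ^+ k).
Proof.
suff [] : liftable (fun t : 'I_5 -> K => (t 2 ^+ 2) ^+ k + (t 3 ^+ 2) ^+ k) /\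
          liftable (fun t : 'I_5 -> K => (t 2 ^+ 2) ^+ k.+1 + (t 3 ^+ 2) ^+ k.+1) by [].
elim: k => [|k [IHk IHk1]].
  split; first by apply: liftable_ext (liftable_const 2) _ => t _; rewrite !expr0.
  by apply: liftable_ext liftable_l12_sum _ => t _; rewrite !expr1.
split=> //; apply: liftable_ext (liftable_add (liftable_mul liftable_l12_sum IHk1)
  (liftable_mul (liftable_const (-1)) (liftable_mul liftable_l12_prod IHk))) _.
by move=> t _; rewrite !exprS; ring.
Qed.

Lemma liftable_sym_monomial i j : liftable (fun t : 'I_5 -> K =>
  (t 2 ^+ 2) ^+ i * (t 3 ^+ 2) ^+ j + (t 2 ^+ 2) ^+ j * (t 3 ^+ 2) ^+ i).
Proof.
wlog le_ij : i j / (i <= j)%N.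
  move=> W; case: (leqP i j) => [/W //|/ltnW /W Lji].
  by apply: liftable_ext Lji _ => t _; rewrite addrC.
rewrite -(subnKC le_ij); move: (j - i)%N => d.
apply: liftable_ext (liftable_mul (liftable_exp i liftable_l12_prod) (liftable_power_sum d)) _.
by move=> t _; rewrite !exprD !exprMn; ring.
Qed.

Definition monomial (a b c e f : nat) (t : 'I_5 -> K) :=
  t 0 ^+ a * t 1 ^+ b * t 2 ^+ c * t 3 ^+ e * t 4 ^+ f.

Lemma expr_half (x : K) n : x ^+ n = x ^+ odd n * (x ^+ 2) ^+ n./2.
Proof. by rewrite -{1}(odd_double_half n) exprD -mul2n exprM. Qed.

(* The parity conditions say that the monomial is fixed by the sign changes of [N]. *)
Lemma liftable_monomial_swap a b c e f :
  ~~ odd (a + b) -> ~~ odd (b + c + f) -> ~~ odd (b + e + f) ->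
  liftable (fun t => monomial a b c e f t + monomial a b e c f t).
Proof.
rewrite !oddD => ab cf ef.
have oa : odd a = odd b by move: ab; case: (odd a); case: (odd b).
have oc : odd c = odd b (+) odd f by move: cf; case: (odd b); case: (odd c); case: (odd f).
have oe : odd e = odd c by rewrite oc; move: ef; case: (odd b); case: (odd e); case: (odd f).
have Lodd : liftable (fun t : 'I_5 -> K =>
    t 0 ^+ odd b * t 1 ^+ odd b * t 2 ^+ odd c * t 3 ^+ odd c * t 4 ^+ odd f).
  rewrite oc; case: (odd b); case: (odd f) => /=.
  - by apply: liftable_ext (@liftable_xyl3 K) _ => t _; rewrite !expr1 !expr0; ring.
  - by apply: liftable_ext liftable_xyl12 _ => t _; rewrite !expr1 !expr0; ring.
  - by apply: liftable_ext (@liftable_l123 K) _ => t _; rewrite !expr1 !expr0; ring.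
  - by apply: liftable_ext (liftable_const 1) _ => t _; rewrite !expr0; ring.
apply: liftable_ext (liftable_mul (liftable_mul (liftable_mul (liftable_mul Lodd
  (liftable_exp a./2 (@liftable_x2 K))) (liftable_exp b./2 (@liftable_y2 K)))
  (liftable_exp f./2 liftable_l32)) (liftable_sym_monomial c./2 e./2)) _.
move=> t _; rewrite /monomial.
rewrite [t 0 ^+ a]expr_half [t 1 ^+ b]expr_half [t 2 ^+ c]expr_half [t 3 ^+ c]expr_half.
rewrite [t 2 ^+ e]expr_half [t 3 ^+ e]expr_half [t 4 ^+ f]expr_half oa oe.
ring.
Qed.

End LiftableSymmetric.

(* [(d, e1, e2, sw)] acts on the slice coordinates [(x, y, l1, l2, l3)] by
   [x -> (-1)^d x], [l1 -> (-1)^e1 l1], [l2 -> (-1)^e2 l2] up to the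
   swap [l1 <-> l2] when [sw], with [y] and [l3] following so that [x y l3] and
   [l1 l2 l3] stay invariant; this is the image of [N] acting on [S]. *)
Definition NS := (bool * bool * bool * bool)%type.

Definition NS_one : NS := (false, false, false, false).

Definition NS_mul (n m : NS) : NS :=
  let: (dn, e1n, e2n, swn) := n in let: (dm, e1m, e2m, swm) := m in
  (dn (+) dm, e1n (+) (if swn then e2m else e1m), e2n (+) (if swn then e1m else e2m), swn (+) swm).

Definition NS_inv (m : NS) : NS :=
  let: (d, e1, e2, sw) := m in (d, if sw then e2 else e1, if sw then e1 else e2, sw).

Lemma NS_mulK m : cancel (NS_mul^~ m) (NS_mul^~ (NS_inv m)).
Proof. by case: m => [[[[] []] []] []] [[[[] []] []] []]. Qed.

Lemma NS_mul_inj m : injective (NS_mul^~ m).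
Proof. exact: can_inj (NS_mulK m). Qed.

Lemma NS_mul_eqr n m : (NS_mul n m == m) = (n == NS_one).
Proof. by case: n m => [[[[] []] []] []] [[[[] []] []] []]. Qed.

Lemma NS_mulV n : NS_mul n (NS_inv n) = NS_one.
Proof. by case: n => [[[[] []] []] []]. Qed.

Lemma big_pair (R : Type) (idx : R) (op : Monoid.com_law idx) (I J : finType)
  (F : I * J -> R) : \big[op/idx]_(n : I * J) F n = \big[op/idx]_i \big[op/idx]_j F (i, j).
Proof. by rewrite pair_bigA; apply: eq_bigr => -[]. Qed.

Lemma big_NS (R : Type) (idx : R) (op : Monoid.com_law idx) (F : NS -> R) :
  \big[op/idx]_(n : NS) F n =
  \big[op/idx]_(d : bool) \big[op/idx]_(e1 : bool) \big[op/idx]_(e2 : bool)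
    \big[op/idx]_(sw : bool) F (d, e1, e2, sw).
Proof.
rewrite !big_pair; apply: eq_bigr => d _; apply: eq_bigr => e1 _.
by apply: eq_bigr => e2 _.
Qed.

Lemma ord5_cases (i : 'I_5) : i = 0 \/ i = 1 \/ i = 2 \/ i = 3 \/ i = 4.
Proof.
case: i => [[|[|[|[|[|//]]]]] Hi];
  [left | right; left | do 2 right; left | do 3 right; left | do 4 right]; exact: val_inj.
Qed.

Section NSAction.
Variable K : fieldType.
Implicit Type t : 'I_5 -> K.

Definition NS_act (n : NS) t : 'I_5 -> K :=
  let: (d, e1, e2, sw) := n in
  fun i => nth 0 [:: (-1) ^+ d * t 0; (-1) ^+ (d (+) e1 (+) e2) * t 1;
                   (-1) ^+ e1 * t (if sw then 3 else 2); (-1) ^+ e2 * t (if sw then 2 else 3);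
                   (-1) ^+ (e1 (+) e2) * t 4] i.

Lemma NS_actM n m t : NS_act n (NS_act m t) =1 NS_act (NS_mul n m) t.
Proof.
case: n => [[[dn e1n] e2n] swn]; case: m => [[[dm e1m] e2m] swm] i.
rewrite /NS_act /NS_mul !signr_addb.
by case: (ord5_cases i) => [|[|[|[|]]]] ->; case: swn; case: swm => /=; ring.
Qed.

Lemma NS_act1 t : NS_act NS_one t =1 t.
Proof.
by move=> i; rewrite /= !expr0; case: (ord5_cases i) => [|[|[|[|]]]] ->; rewrite /= mul1r.
Qed.

Lemma slice_NS_actM n m t : slice (NS_act n (NS_act m t)) = slice (NS_act (NS_mul n m) t).
Proof. by rewrite /slice !NS_actM. Qed.

Lemma signed_perm_diag (a b : K) : is_sign a -> is_sign b -> signed_perm 1%g (mx2 a 0 0 b).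
Proof.
by move=> sa sb i j; rewrite perm1; case: (ord2_cases i) => ->; case: (ord2_cases j) => ->;
  rewrite !mxE.
Qed.

Lemma signed_perm_antidiag (a b : K) :
  is_sign a -> is_sign b -> signed_perm (tperm 0 1) (mx2 0 a b 0).
Proof.
by move=> sa sb i j; case: (ord2_cases i) => ->; case: (ord2_cases j) => ->;
  rewrite ?tpermL ?tpermR !mxE.
Qed.

Lemma NS_act_inN n : exists g1 g2 : 'M[K]_3,
  inN g1 g2 /\ forall t, act g1 g2 (slice t) = slice (NS_act n t).
Proof.
case: n => [[[d e1] e2] sw].
pose sgn (b : bool) : K := (-1) ^+ b.
have [A1 [A2 [s [sA1 sA2 E]]]] : exists A1 A2 s, [/\ signed_perm s A1, signed_perm s A2 &
    forall t, act (embed2 A1) (embed2 A2) (slice t) = slice (NS_act (d, e1, e2, sw) t)].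
  case: sw.
  - exists (mx2 0 1 (- sgn d) 0), (mx2 0 (sgn e1) (- (sgn d * sgn e2)) 0), (tperm 0 1).
    split=> [||t]; first by apply: signed_perm_antidiag; [left | apply/is_signN/is_sign_signr].
      apply: signed_perm_antidiag; first exact: is_sign_signr.
      by apply/is_signN/is_signM; apply: is_sign_signr.
    rewrite actE (SO3_inv (embed2_SO3 (signed_perm_orthogonal
      (signed_perm_antidiag (or_introl erefl) (is_signN (@is_sign_signr K d)))))).
    rewrite /slice /= !embed2E !det_mx2 !mxE /= tr_mx3 !mul_mx3_col3 !mul_mx3 !signr_addb.
    by case: d; rewrite /sgn ?expr0 ?expr1; congr (_, _, _); (congr col3 || congr mx3); ring.
  - exists (mx2 1 0 0 (sgn d)), (mx2 (sgn e1) 0 0 (sgn e2 * sgn d)), 1%g.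
    split=> [||t]; first by apply: signed_perm_diag; [left | apply: is_sign_signr].
      by apply: signed_perm_diag; [| apply: is_signM]; apply: is_sign_signr.
    rewrite actE (SO3_inv (embed2_SO3 (signed_perm_orthogonal
      (signed_perm_diag (or_introl erefl) (@is_sign_signr K d))))).
    rewrite /slice /= !embed2E !det_mx2 !mxE /= tr_mx3 !mul_mx3_col3 !mul_mx3 !signr_addb.
    by case: d; rewrite /sgn ?expr0 ?expr1; congr (_, _, _); (congr col3 || congr mx3); ring.
by exists (embed2 A1), (embed2 A2); split=> //; exists s, A1, A2.
Qed.

End NSAction.

Section NSAverage.
Variable K : fieldType.
Implicit Type t : 'I_5 -> K.

Lemma prod_ord5 (F : 'I_5 -> K) : \prod_(i < 5) F i = F 0 * F 1 * F 2 * F 3 * F 4.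
Proof.
by rewrite !big_ord_recr big_ord0 /= mul1r; congr (F _ * F _ * F _ * F _ * F _); apply: val_inj.
Qed.

Lemma NS_act_monomial (m : 'X_{1..5}) d e1 e2 sw t :
  \prod_(i < 5) NS_act (d, e1, e2, sw) t i ^+ m i =
  ((-1) ^+ d) ^+ (m 0 + m 1) * ((-1) ^+ e1) ^+ (m 1 + m 2 + m 4) *
  ((-1) ^+ e2) ^+ (m 1 + m 3 + m 4) *
  monomial (m 0) (m 1) (if sw then m 3 else m 2) (if sw then m 2 else m 3) (m 4) t.
Proof. by rewrite prod_ord5 /= !signr_addb /monomial; case: sw; rewrite !exprMn !exprD; ring. Qed.

Definition parity_sum (k : nat) : K := 1 + (-1) ^+ k.

Lemma parity_sumE k : parity_sum k = if odd k then 0 else 2.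
Proof. by rewrite /parity_sum -signr_odd; case: (odd k); rewrite ?expr1 ?expr0 ?subrr. Qed.

Lemma NS_sum_monomial (m : 'X_{1..5}) t :
  \sum_(n : NS) \prod_(i < 5) NS_act n t i ^+ m i =
  parity_sum (m 0 + m 1) * parity_sum (m 1 + m 2 + m 4) * parity_sum (m 1 + m 3 + m 4) *
  (monomial (m 0) (m 1) (m 2) (m 3) (m 4) t + monomial (m 0) (m 1) (m 3) (m 2) (m 4) t).
Proof.
rewrite big_NS.
under eq_bigr => d _ do under eq_bigr => e1 _ do under eq_bigr => e2 _ do
  under eq_bigr => sw _ do rewrite NS_act_monomial.
by rewrite !big_bool /= expr1 expr0 !expr1n /parity_sum; ring.
Qed.

Lemma liftable_NS_sum_monomial (m : 'X_{1..5}) :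
  liftable (fun t => \sum_(n : NS) \prod_(i < 5) NS_act n t i ^+ m i).
Proof.
have [odd_m|] := boolP [|| odd (m 0 + m 1), odd (m 1 + m 2 + m 4) | odd (m 1 + m 3 + m 4)].
  apply: liftable_ext (liftable_const 0) _ => t _; rewrite NS_sum_monomial !parity_sumE.
  by case/or3P: odd_m => ->; rewrite !(mulr0, mul0r).
rewrite !negb_or => /and3P[e1 e2 e3].
have Lswap := @liftable_monomial_swap K _ _ _ _ _ e1 e2 e3.
apply: liftable_ext (liftable_mul (liftable_const (8 : K)) Lswap) _.
by move=> t _; rewrite NS_sum_monomial !parity_sumE (negbTE e1) (negbTE e2) (negbTE e3); ring.
Qed.

(* The Reynolds operator of [N] on [S] (up to the factor [16]). *)
Lemma liftable_NS_sum phi : polyfun phi -> liftable (fun t => \sum_(n : NS) phi (NS_act n t)).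
Proof.
move=> [p pphi].
apply: liftable_ext (liftable_sum (msupp p) (fun m => liftable_mul (liftable_const p@_m)
  (liftable_NS_sum_monomial m))) _ => t _.
under [RHS]eq_bigr => n _ do rewrite -pphi mevalE.
by rewrite exchange_big; apply: eq_bigr => m _; rewrite mulr_sumr.
Qed.

End NSAverage.

Section Surjectivity.
Variables (K : numFieldType) (a b : polyL K).
Hypotheses (Sb : ratfun_on (@Ssub K) a b) (abN : invariant_on (@Ssub K) (@inN K) a b).
Implicit Type t : 'I_5 -> K.

Let A t := ev a (slice t).
Let B t := ev b (slice t).

(* The norm of [b] for the action of [N] on [S], and the matching numerator. *)
Let Q t := \prod_(n : NS) B (NS_act n t).
Let P t := A t * \prod_(n : NS | n != NS_one) B (NS_act n t).

Lemma polyfun_B_NS n : polyfun (fun t => B (NS_act n t)).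
Proof.
have [g1 [g2 [_ E]]] := NS_act_inN K n.
by apply: (cl_ext (polyfun_subalgebra K 5)) (polyfun_ev_act_slice b g1 g2) _ => t; rewrite E.
Qed.

Lemma B_NS_actM n m t : B (NS_act n (NS_act m t)) = B (NS_act (NS_mul n m) t).
Proof. by rewrite /B slice_NS_actM. Qed.

Lemma AB_NS_act n t : A (NS_act n t) * B t = A t * B (NS_act n t).
Proof.
have [g1 [g2 [g12 E]]] := NS_act_inN K n.
by have /subr0_eq := abN g12 (slice_Ssub t); rewrite E.
Qed.

Lemma Q_NS_act m t : Q (NS_act m t) = Q t.
Proof.
rewrite /Q [RHS](reindex_inj (@NS_mul_inj m)) /=.
by apply: eq_bigr => n _; rewrite B_NS_actM.
Qed.

Lemma P_NS_act m t : P (NS_act m t) * B t = A t * Q t.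
Proof.
rewrite /P.
have -> : \prod_(n | n != NS_one) B (NS_act n (NS_act m t)) = \prod_(k | k != m) B (NS_act k t).
  rewrite [RHS](reindex_inj (@NS_mul_inj m)) /=.
  by apply: eq_big => [n|n _]; rewrite ?NS_mul_eqr ?B_NS_actM.
by rewrite mulrAC AB_NS_act -mulrA /Q [in RHS](bigD1 m).
Qed.

Lemma sum_P_mul_B t : (\sum_(m : NS) P (NS_act m t)) * B t = A t * \sum_(m : NS) Q (NS_act m t).
Proof.
rewrite mulr_suml mulr_sumr; apply: eq_bigr => m _.
by rewrite P_NS_act Q_NS_act.
Qed.

Lemma polyfun_P : polyfun P.
Proof.
have PA := polyfun_subalgebra K 5.
by apply: (cl_mul PA); [apply: polyfun_ev_slice | apply: (cl_prod PA) => n _; apply: polyfun_B_NS].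
Qed.

Lemma polyfun_Q : polyfun Q.
Proof. by apply: (cl_prod (polyfun_subalgebra K 5)) => n _; apply: polyfun_B_NS. Qed.

Lemma sum_Q_generic_neq0 : exists t, generic t /\ \sum_(m : NS) Q (NS_act m t) != 0.
Proof.
have [t1 Bt1] := ratfun_on_slice Sb.
have B_NS_neq0 n : exists t, B (NS_act n t) != 0.
  by exists (NS_act (NS_inv n) t1); rewrite B_NS_actM NS_mulV /B /slice !NS_act1.
have [t2 Qt2] := polyfun_prod_neq0 (index_enum NS) polyfun_B_NS B_NS_neq0.
have [|t] := polyfun_mulf_neq0 (t1 := fun=> 1) (polyfun_generic K) polyfun_Q _ Qt2.
  by rewrite mulr1 oner_eq0.
rewrite mulf_eq0 negb_or => /andP[/genericE gt Qt]; exists t; split=> //.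
rewrite (eq_bigr _ (fun m _ => Q_NS_act m t)) sumr_const !card_prod !card_bool.
by rewrite mulrn_eq0 negb_or Qt.
Qed.

Lemma restriction_surjective : exists p q : polyL K,
  [/\ ratfun_on (@X2 K) p q, invariant_on (@X2 K) (@inG K) p q,
      ratfun_on (@Ssub K) p q & same_on (@Ssub K) p q a b].
Proof.
have [nP [dP [GnP GdP ndP]]] := liftable_NS_sum polyfun_P.
have [nQ [dQ [GnQ GdQ ndQ]]] := liftable_NS_sum polyfun_Q.
have [t0 [gt0 Qt0]] := sum_Q_generic_neq0.
have Sq : ratfun_on (@Ssub K) (nP * dQ) (dP * nQ).
  have [dPt0 _] := ndP t0 gt0; have [dQt0 nQt0] := ndQ t0 gt0.
  move=> /(_ _ (slice_Ssub t0)) /eqP; apply/negP.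
  by rewrite /ev mevalM -!/(ev _ _) nQt0 !mulf_neq0.
exists (nP * dQ), (dP * nQ); split=> //.
- exact: ratfun_on_subset (@Ssub_X2 K) Sq.
- apply: Ginvariant_invariant_on => g1 g2 z g12; rewrite /ev !mevalM -!/(ev _ _).
  + by rewrite GnP ?GdQ.
  + by rewrite GdP ?GnQ.
move=> _ /SsubP[t ->].
have -> : ev (nP * dQ) (slice t) * ev b (slice t) - ev a (slice t) * ev (dP * nQ) (slice t) =
  ev (nP * dQ * b - a * (dP * nQ)) (slice t) by rewrite /ev mevalB !mevalM.
move: t; apply: (polyfun_vanish_dense (polyfun_ev_slice _) (polyfun_generic K) (t0 := t0)).
  exact/genericE.
move=> t /genericE gt; have [_ nPt] := ndP t gt; have [_ nQt] := ndQ t gt.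
rewrite /ev mevalB !mevalM -!/(ev _ _) nPt nQt.
transitivity (ev dP (slice t) * ev dQ (slice t) *
  ((\sum_(m : NS) P (NS_act m t)) * B t - A t * \sum_(m : NS) Q (NS_act m t))).
  by rewrite /A /B; ring.
by rewrite sum_P_mul_B subrr mulr0.
Qed.

End Surjectivity.

Unset Implicit Arguments.

Theorem corollaryB3 (R : realType) :
  let K := R[i] in
  let X := @X2 K in
  let S := @Ssub K in
  (* (1) restriction is defined on C(X_2)^G: every G-invariant rational function
         on X_2 has a representative whose denominator does not vanish on S *)
  (forall p q : polyL K,
     ratfun_on X p q -> invariant_on X (@inG K) p q ->
     exists p' q' : polyL K,
       [/\ ratfun_on X p' q', same_on X p q p' q' & ratfun_on S p' q']) /\
  (* (2) the restriction lands in C(S)^N *)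
  (forall p q : polyL K,
     ratfun_on X p q -> invariant_on X (@inG K) p q -> ratfun_on S p q ->
     invariant_on S (@inN K) p q) /\
  (* (3) injectivity *)
  (forall p1 q1 p2 q2 : polyL K,
     ratfun_on X p1 q1 -> invariant_on X (@inG K) p1 q1 -> ratfun_on S p1 q1 ->
     ratfun_on X p2 q2 -> invariant_on X (@inG K) p2 q2 -> ratfun_on S p2 q2 ->
     same_on S p1 q1 p2 q2 -> same_on X p1 q1 p2 q2) /\
  (* (4) surjectivity onto C(S)^N *)
  (forall a b : polyL K,
     ratfun_on S a b -> invariant_on S (@inN K) a b ->
     exists p q : polyL K,
       [/\ ratfun_on X p q, invariant_on X (@inG K) p q,
           ratfun_on S p q & same_on S p q a b]).
Proof.
move=> K X S; split; first exact: restriction_defined.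
split; first by move=> p q _ pqG _; apply: restriction_invariant.
split; first by move=> p1 q1 p2 q2 _ pq1G Sq1 _ pq2G Sq2; apply: restriction_injective.
exact: restriction_surjective.
Qed.
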